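(* Let $G$ be a quasi-regular mixed lattice group. (a) Let $u,v_1,v_2\in G$ with $0\preceq u$, $0\le v_1$, $0\preceq v_2$ and $u\le v_1+v_2$. Then there exist $u_1,u_2\in G$ with $0\le u_1\le v_1$, $0\preceq u_2\le v_2$ and $u=u_1+u_2$. Moreover, if $0\preceq v_1$ then $0\preceq u_1$, and if $u\preceq v_1+v_2$ then $u_2\preceq v_2$. (b) Let $u,v_1,v_2\in G$ with $0\le u$, $0\preceq v_1$, $0\le v_2$ and $u\preceq v_1+v_2$. Then there exist $u_1,u_2\in G$ with $0\le u_1\preceq v_1$, $0\le u_2\le v_2$ and $u=u_1+u_2$. Moreover, if $0\preceq u$ then $0\preceq u_1$.
   Context: A mixed lattice group is a commutative group $G$ with two translation-invariant partial orderings $\le$ (initial order) and $\preceq$ (specific order) such that for all $x,y\in G$ the mixed lower envelope $x\curlywedge y=\max\{w: w\preceq x,\ w\le y\}$ and the mixed upper envelope $x\curlyvee y=\min\{w: x\preceq w,\ y\le w\}$ exist (max/min with respect to $\le$). $G$ is quasi-regular if $G_{sp}=\{x: 0\preceq x\}$ is closed under $\curlywedge$ and $\curlyvee$. *)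

From mathcomp Require Import all_boot all_algebra.
Set Implicit Arguments. Unset Strict Implicit. Unset Printing Implicit Defensive.
Import GRing.Theory.
Local Open Scope ring_scope.

Definition partial_order (G : Type) (r : G -> G -> Prop) : Prop :=
  [/\ (forall x, r x x),
      (forall x y z, r x y -> r y z -> r x z) &
      (forall x y, r x y -> r y x -> x = y)].

Definition translation_invariant (G : zmodType) (r : G -> G -> Prop) : Prop :=
  forall x y z : G, r x y -> r (x + z) (y + z).

(* w is the mixed lower envelope x ⋏ y : the <=-maximum of
   {w : w ≼ x, w <= y}  (le = initial order, sp = specific order). *)
Definition is_mixed_lower (G : Type) (le sp : G -> G -> Prop) (x y w : G) : Prop :=
  [/\ sp w x, le w y & forall z, sp z x -> le z y -> le z w].

Definition is_mixed_upper (G : Type) (le sp : G -> G -> Prop) (x y w : G) : Prop :=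
  [/\ sp x w, le y w & forall z, sp x z -> le y z -> le w z].

Definition mixed_lattice_group (G : zmodType) (le sp : G -> G -> Prop) : Prop :=
  [/\ partial_order le, partial_order sp,
      translation_invariant le, translation_invariant sp &
      (forall x y : G, (exists w, is_mixed_lower le sp x y w) /\
                       (exists w, is_mixed_upper le sp x y w))].

Definition quasi_regular (G : zmodType) (le sp : G -> G -> Prop) : Prop :=
  (forall x y w : G, sp 0 x -> sp 0 y -> is_mixed_lower le sp x y w -> sp 0 w) /\
  (forall x y w : G, sp 0 x -> sp 0 y -> is_mixed_upper le sp x y w -> sp 0 w).

From mathcomp Require Import all_boot all_algebra.
Set Implicit Arguments. Unset Strict Implicit. Unset Printing Implicit Defensive.
Import GRing.Theory.
Local Open Scope ring_scope.

(* In both parts take u1 to be the mixed lower envelope of u and v1 (in that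
   order for (a), in the other order for (b)) and u2 := u - u1.  Maximality of
   the envelope applied to u - v2 gives u2 <= v2.  For the specific bound
   u2 ≼ v2 in (a), translate the envelope by v2 - u: it becomes the envelope
   of v2 and v1 + v2 - u, two specifically positive elements, so
   quasi-regularity makes it specifically positive. *)

Section TranslationInvariant.

Variables (G : zmodType) (r : G -> G -> Prop).
Hypothesis r_ti : translation_invariant r.

Lemma ti_subr (x y z : G) : r x y -> r (x - z) (y - z).
Proof. exact: r_ti. Qed.

Lemma ti_ge0_sub (x y : G) : r 0 (y - x) <-> r x y.
Proof.
by split=> [/(r_ti x)|/(ti_subr x)]; rewrite ?add0r ?subrK ?subrr.
Qed.

Lemma ti_subl_ge0 (x v : G) : r 0 v -> r (x - v) x.
Proof. by move=> v_ge0; apply/ti_ge0_sub; rewrite opprB addrC subrK. Qed.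

Lemma ti_subr_addr (x y z : G) : r x (y + z) -> r (x - z) y.
Proof. by move/(ti_subr z); rewrite addrK. Qed.

Lemma ti_subC (x y z : G) : r (x - y) z -> r (x - z) y.
Proof.
move/ti_ge0_sub=> le_xz; apply/ti_ge0_sub.
by rewrite opprB addrCA -opprB.
Qed.

End TranslationInvariant.

Section MixedLatticeGroup.

Variables (G : zmodType) (le sp : G -> G -> Prop).
Hypotheses (le_ti : translation_invariant le) (sp_ti : translation_invariant sp).
Hypothesis mixed_lower_exists : forall x y : G, exists w, is_mixed_lower le sp x y w.
Hypothesis sp_ge0_mixed_lower : forall x y w : G,
  sp 0 x -> sp 0 y -> is_mixed_lower le sp x y w -> sp 0 w.

Lemma mixed_lower_translate (x y w t : G) :
  is_mixed_lower le sp x y w -> is_mixed_lower le sp (x + t) (y + t) (w + t).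
Proof.
case=> w_sp_x w_le_y w_max; split; [exact: sp_ti | exact: le_ti |].
move=> z z_sp z_le; rewrite -(subrK t z); apply: le_ti; apply: w_max.
- by move/(ti_subr sp_ti t): z_sp; rewrite addrK.
- by move/(ti_subr le_ti t): z_le; rewrite addrK.
Qed.

Lemma mixed_lower_compl_sp (u v1 v2 w : G) : is_mixed_lower le sp u v1 w ->
  sp 0 v2 -> sp u (v1 + v2) -> sp (u - w) v2.
Proof.
move=> /(mixed_lower_translate (v2 - u)) low v2_spos u_sp.
have v2_sp : sp 0 (u + (v2 - u)) by rewrite addrC subrK.
have v12_sp : sp 0 (v1 + (v2 - u)) by rewrite addrA; apply/(ti_ge0_sub sp_ti).
move: (sp_ge0_mixed_lower v2_sp v12_sp low) => w_spos.
by apply/(ti_ge0_sub sp_ti); rewrite opprB addrCA.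
Qed.

Lemma decomposition_sp_le (u v1 v2 : G) :
  sp 0 u -> le 0 v1 -> sp 0 v2 -> le u (v1 + v2) ->
  exists u1 u2 : G,
    [/\ le 0 u1, le u1 v1, sp 0 u2, le u2 v2 &
        [/\ u = u1 + u2, (sp 0 v1 -> sp 0 u1) & (sp u (v1 + v2) -> sp u2 v2)]].
Proof.
move=> u_spos v1_pos v2_spos u_le.
have [w low] := mixed_lower_exists u v1; have [w_sp_u w_le_v1 w_max] := low.
exists w, (u - w); split=> //.
- exact: w_max.
- exact/(ti_ge0_sub sp_ti).
- apply: (ti_subC le_ti); apply: w_max.
  + exact: ti_subl_ge0.
  + exact: ti_subr_addr.
- split; first by rewrite addrC subrK.
  + by move=> v1_spos; apply: sp_ge0_mixed_lower low.
  + exact: mixed_lower_compl_sp.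
Qed.

Lemma decomposition_le_sp (u v1 v2 : G) :
  le 0 u -> sp 0 v1 -> le 0 v2 -> sp u (v1 + v2) ->
  exists u1 u2 : G,
    [/\ le 0 u1, sp u1 v1, le 0 u2, le u2 v2 &
        u = u1 + u2 /\ (sp 0 u -> sp 0 u1)].
Proof.
move=> u_pos v1_spos v2_pos u_sp.
have [w low] := mixed_lower_exists v1 u; have [w_sp_v1 w_le_u w_max] := low.
exists w, (u - w); split=> //.
- exact: w_max.
- exact/(ti_ge0_sub le_ti).
- apply: (ti_subC le_ti); apply: w_max.
  + exact: ti_subr_addr.
  + exact: ti_subl_ge0.
- split; first by rewrite addrC subrK.
  by move=> u_spos; apply: sp_ge0_mixed_lower low.
Qed.

End MixedLatticeGroup.

Theorem theorem3p9 (G : zmodType) (le sp : G -> G -> Prop)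
  (HG : mixed_lattice_group le sp) (Hq : quasi_regular le sp) :
  (forall u v1 v2 : G,
     sp 0 u -> le 0 v1 -> sp 0 v2 -> le u (v1 + v2) ->
     exists u1 u2 : G,
       [/\ le 0 u1, le u1 v1, sp 0 u2, le u2 v2 &
           [/\ u = u1 + u2, (sp 0 v1 -> sp 0 u1) & (sp u (v1 + v2) -> sp u2 v2)]]) /\
  (forall u v1 v2 : G,
     le 0 u -> sp 0 v1 -> le 0 v2 -> sp u (v1 + v2) ->
     exists u1 u2 : G,
       [/\ le 0 u1, sp u1 v1, le 0 u2, le u2 v2 &
           u = u1 + u2 /\ (sp 0 u -> sp 0 u1)]).
Proof.
case: HG Hq => _ _ le_ti sp_ti envelopes [sp_ge0_lower _].
have lower_exists x y := proj1 (envelopes x y).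
split=> u v1 v2.
- exact: decomposition_sp_le le_ti sp_ti lower_exists sp_ge0_lower u v1 v2.
- exact: decomposition_le_sp le_ti sp_ti lower_exists sp_ge0_lower u v1 v2.
Qed.
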